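(* Let $\Phi$ be the matrix (with respect to $h_0$) of a left-invariant metric on $G$ of nonnegative sectional curvature, and let $\mathfrak p_0\subset\mathfrak g$ be the eigenspace of $\Phi$ for its smallest eigenvalue (equivalently, the eigenspace of $\Psi=I-\Phi^{-1}$ for its smallest eigenvalue). If $X\in\mathfrak p_0$, $Y\in\mathfrak g$ and $[X,Y]=0$, then $[X,\Phi^{-1}Y]\in\mathfrak p_0$.
   Context: $G$ is a compact Lie group with Lie algebra $\mathfrak g$ and bi-invariant metric $h_0$. The matrix of a left-invariant metric $h$ is the unique $h_0$-self-adjoint positive definite endomorphism $\Phi$ of $\mathfrak g$ with $h(X,Y)=h_0(\Phi X,Y)$ for all $X,Y\in\mathfrak g$. *)

From HB Require Import structures.
From mathcomp Require Import all_boot all_order all_algebra.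
From mathcomp Require Import reals.
Set Implicit Arguments. Unset Strict Implicit. Unset Printing Implicit Defensive.
Import Order.TTheory GRing.Theory Num.Theory.
Local Open Scope ring_scope.

(* The Lie algebra g is identified (via a basis) with row vectors 'rV[R]_n;
   endomorphisms act on the right: X |-> X *m A. *)

Definition form (R : realType) (n : nat) (B : 'M[R]_n) (X Y : 'rV[R]_n) : R :=
  (X *m B *m Y^T) 0 0.

(* compact Lie algebra with bi-invariant (ad-invariant) inner product h0 = form B *)
Definition compact_lie_data (R : realType) (n : nat)
    (br : 'rV[R]_n -> 'rV[R]_n -> 'rV[R]_n) (B : 'M[R]_n) : Prop :=
  (forall (a : R) X Y Z, br (a *: X + Y) Z = a *: br X Z + br Y Z) /\
  (forall X Y, br X Y = - br Y X) /\
  (forall X Y Z, br X (br Y Z) + br Y (br Z X) + br Z (br X Y) = 0) /\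
  (forall X Y, form B X Y = form B Y X) /\
  (forall X, X != 0 -> 0 < form B X X) /\
  (forall X Y Z, form B (br Z X) Y + form B X (br Z Y) = 0).

(* Phi is the matrix w.r.t. h0 of a left-invariant metric:
   h0-self-adjoint and positive definite. *)
Definition metric_matrix (R : realType) (n : nat) (B Phi : 'M[R]_n) : Prop :=
  (forall X Y, form B (X *m Phi) Y = form B X (Y *m Phi)) /\
  (forall X, X != 0 -> 0 < form B (X *m Phi) X).

Definition lmetric (R : realType) (n : nat) (B Phi : 'M[R]_n) (X Y : 'rV[R]_n) : R :=
  form B (X *m Phi) Y.

(* Levi-Civita connection on left-invariant fields, via the Koszul formula *)
Definition koszul (R : realType) (n : nat)
    (br : 'rV[R]_n -> 'rV[R]_n -> 'rV[R]_n) (h : 'rV[R]_n -> 'rV[R]_n -> R)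
    (nabla : 'rV[R]_n -> 'rV[R]_n -> 'rV[R]_n) : Prop :=
  forall X Y Z, 2 * h (nabla X Y) Z = h (br X Y) Z - h (br X Z) Y - h (br Y Z) X.

Definition curv (R : realType) (n : nat)
    (br nabla : 'rV[R]_n -> 'rV[R]_n -> 'rV[R]_n) (X Y Z : 'rV[R]_n) : 'rV[R]_n :=
  nabla X (nabla Y Z) - nabla Y (nabla X Z) - nabla (br X Y) Z.

Definition nonneg_sec_curv (R : realType) (n : nat)
    (br : 'rV[R]_n -> 'rV[R]_n -> 'rV[R]_n) (B Phi : 'M[R]_n) : Prop :=
  exists nabla, koszul br (lmetric B Phi) nabla /\
    forall X Y, 0 <= lmetric B Phi (curv br nabla X Y Y) X.

(* Let lam be the least eigenvalue of Phi, X a lam-eigenvector, W = Phi^-1 Y and Z = [X, W].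
   Since [X, Phi W] = 0, ad-invariance of h0 kills most terms of the Koszul formula and one finds
     4 h(R(X,W)W, X) = - (3 (h0(Z Phi, Z) - lam |Z|^2) + lam (|Z|^2 - lam h0(Z Phi^-1, Z))).
   Both brackets are nonnegative: lam bounds the Rayleigh quotient of Phi from below, hence
   lam Phi <= Phi^2 as well.  Nonnegative curvature therefore forces h0(Z Phi, Z) = lam |Z|^2,
   and a vector at which the Rayleigh quotient attains its minimum lam is a lam-eigenvector. *)

From Pilot Require Import Defs.
From HB Require Import structures.
From mathcomp Require Import all_boot all_order all_algebra.
From mathcomp Require Import reals.
From mathcomp Require Import all_classical all_reals all_analysis.
From mathcomp Require Import ring lra.
Import Order.TTheory GRing.Theory Num.Theory.
Import numFieldNormedType.Exports.
Set Implicit Arguments. Unset Strict Implicit. Unset Printing Implicit Defensive.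
Local Open Scope ring_scope.
Local Notation form := Defs.form.

Section Form.
Variables (R : realType) (n : nat) (B : 'M[R]_n).

Lemma formDl X Y Z : form B (X + Y) Z = form B X Z + form B Y Z.
Proof. by rewrite /form !mulmxDl mxE. Qed.
Lemma formZl a X Z : form B (a *: X) Z = a * form B X Z.
Proof. by rewrite /form -!scalemxAl mxE. Qed.
Lemma formNl X Z : form B (- X) Z = - form B X Z.
Proof. by rewrite -scaleN1r formZl mulN1r. Qed.
Lemma formBl X Y Z : form B (X - Y) Z = form B X Z - form B Y Z.
Proof. by rewrite formDl formNl. Qed.
Lemma form0l Z : form B 0 Z = 0.
Proof. by rewrite /form !mul0mx mxE. Qed.
Lemma formDr X Y Z : form B Z (X + Y) = form B Z X + form B Z Y.
Proof. by rewrite /form raddfD /= mulmxDr mxE. Qed.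
Lemma formZr a X Z : form B Z (a *: X) = a * form B Z X.
Proof. by rewrite /form linearZ /= -scalemxAr mxE. Qed.
Lemma formNr X Z : form B Z (- X) = - form B Z X.
Proof. by rewrite -scaleN1r formZr mulN1r. Qed.
Lemma form0r Z : form B Z 0 = 0.
Proof. by rewrite /form trmx0 mulmx0 mxE. Qed.

End Form.

Lemma quadratic_ge0_lin_coef_eq0 (R : realFieldType) (a b : R) :
  (forall t, 0 <= a * t + b * t ^+ 2) -> a = 0.
Proof.
move=> ge0; set k := `|b| + 1.
have k_gt0 : 0 < k by rewrite /k ltr_pwDr ?normr_ge0.
have b_lt_k : b < k by rewrite /k; have := ler_norm b; lra.
set t := - a / k.
have a_t : a = - (t * k) by rewrite /t divfK ?opprK ?gt_eqF.
have bk_t2_ge0 : 0 <= (b - k) * t ^+ 2 by have := ge0 t; rewrite a_t; lra.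
have t2_le0 : t ^+ 2 <= 0 by nra.
have t0 : t = 0 by apply/eqP; rewrite -sqrf_eq0 eq_le t2_le0 sqr_ge0.
by rewrite a_t t0 mul0r oppr0.
Qed.

Lemma continuous_sum (R : realType) (T : topologicalType) (I : Type) (s : seq I)
    (F : I -> T -> R^o) :
  (forall i, continuous (F i)) -> continuous (fun x => \sum_(i <- s) F i x : R^o).
Proof.
move=> F_cont; elim: s => [|a s IH] x.
  rewrite (_ : (fun x => _) = fun=> 0); first exact: cst_continuous.
  by apply: funext => y; rewrite big_nil.
rewrite (_ : (fun x => _) = F a + (fun x => \sum_(i <- s) F i x)); last first.
  by apply: funext => y; rewrite big_cons.
exact: (continuousD (F_cont a x) (IH x)).
Qed.

Lemma continuous_mulmx_coord (R : realType) n (A : 'M[R]_n) j :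
  continuous (fun v : 'rV[R]_n => (v *m A) 0 j).
Proof.
have -> : (fun v : 'rV[R]_n => (v *m A) 0 j) = (fun v => \sum_k (v 0 k * A k j) : R^o).
  by apply: funext => v; rewrite mxE.
apply: continuous_sum => k x.
by apply: continuousM; [exact: coord_continuous | exact: cst_continuous].
Qed.

Lemma continuous_form_quad (R : realType) n (B M : 'M[R]_n) :
  continuous (fun v : 'rV[R]_n => form B (v *m M) v).
Proof.
have -> : (fun v : 'rV[R]_n => form B (v *m M) v) =
          (fun v => \sum_j ((v *m (M *m B)) 0 j * v 0 j) : R^o).
  apply: funext => v; rewrite /form mulmxA mxE.
  by apply: eq_bigr => j _; congr (_ * _); rewrite mxE.
apply: continuous_sum => j x; apply: continuousM; first exact: continuous_mulmx_coord.
exact: coord_continuous.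
Qed.

Section Rayleigh.
Variables (R : realType) (n : nat) (B Phi : 'M[R]_n).
Hypothesis form_sym : forall X Y, form B X Y = form B Y X.
Hypothesis form_pos : forall X, X != 0 -> 0 < form B X X.
Hypothesis Phi_sa : forall X Y, form B (X *m Phi) Y = form B X (Y *m Phi).

Lemma form_ge0 X : 0 <= form B X X.
Proof. by have [->|/form_pos/ltW//] := eqVneq X 0; rewrite form0l. Qed.

Lemma rayleigh_gap_shift (mu s : R) c E :
  form B ((c + s *: E) *m Phi) (c + s *: E) - mu * form B (c + s *: E) (c + s *: E) =
  form B (c *m Phi) c - mu * form B c c + 2 * s * form B (c *m Phi - mu *: c) E
  + s ^+ 2 * (form B (E *m Phi) E - mu * form B E E).
Proof.
rewrite mulmxDl -scalemxAl !(formDl, formDr, formZl, formZr, formBl, formNl) (form_sym E c).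
rewrite (Phi_sa E c) (form_sym E (c *m Phi)); ring.
Qed.

Lemma rayleigh_minimizer_eigenvector (mu : R) c :
  (forall V, mu * form B V V <= form B (V *m Phi) V) ->
  form B (c *m Phi) c = mu * form B c c -> c *m Phi = mu *: c.
Proof.
move=> mu_min c_min; set E := c *m Phi - mu *: c.
have EE0 : 2 * form B E E = 0.
  apply: (@quadratic_ge0_lin_coef_eq0 _ _ (form B (E *m Phi) E - mu * form B E E)) => t.
  by have := mu_min (c + t *: E); rewrite -subr_ge0 rayleigh_gap_shift c_min subrr add0r -/E; lra.
apply/eqP; rewrite -subr_eq0 -/E; apply/negPn/negP => /form_pos.
by move/eqP: EE0; rewrite mulf_eq0 pnatr_eq0 => /eqP->; rewrite ltxx.
Qed.

Variable lam0 : R.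
Hypothesis lam0_min : forall mu, eigenvalue Phi mu -> lam0 <= mu.

Local Open Scope classical_set_scope.
(* The Rayleigh quotient attains its minimum on the unit sphere, and a minimiser is an
   eigenvector, so that minimum is an eigenvalue. *)
Lemma rayleigh_ge_min_eigenvalue V : lam0 * form B V V <= form B (V *m Phi) V.
Proof.
have [->|V_neq0] := eqVneq V 0; first by rewrite mul0mx !form0l mulr0.
pose S := [set v : 'rV[R]_n | `|v| = 1].
pose f v := form B (v *m Phi) v / form B v v.
have S_neq0 v : S v -> v != 0.
  by rewrite /S /= => v1; apply: contra_eq_neq v1 => ->; rewrite normr0 eq_sym oner_neq0.
have normalize W : W != 0 -> S (`|W|^-1 *: W).
  by move=> W_neq0; rewrite /S /= normrZ normfV normr_id mulVf // normr_eq0.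
have S_ne : S !=set0 by exists (`|V|^-1 *: V); exact: normalize.
have S_compact : compact S.
  apply: bounded_closed_compact.
    by exists 1; split => // M M1 x /= ->; exact: ltW.
  apply: (@preimage_closed _ _ (fun v : 'rV[R]_n => `|v|) [set 1]); last exact: closed_eq.
  by move=> x _; exact: norm_continuous.
have f_cont : {within S, continuous f}.
  apply: continuous_in_subspaceT => x /set_mem Sx.
  have inv_cont : {for x, continuous (fun v : 'rV[R]_n => (form B v v)^-1 : R^o)}.
    apply: continuousV; first by apply/lt0r_neq0/form_pos/S_neq0.
    rewrite (_ : (fun v => _) = fun v => form B (v *m 1%:M) v); last first.
      by apply: funext => v; rewrite mulmx1.
    exact: continuous_form_quad.
  exact: (continuousM (@continuous_form_quad R n B Phi x) inv_cont).
have [c /set_mem Sc c_min] := EVT_min_rV S_ne S_compact f_cont.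
have fZ k W : k != 0 -> f (k *: W) = f W.
  move=> k_neq0; have [->|W_neq0] := eqVneq W 0; first by rewrite scaler0.
  have WW_neq0 := lt0r_neq0 (form_pos W_neq0).
  by rewrite /f -scalemxAl !(formZl, formZr); field; rewrite WW_neq0 k_neq0.
have fc_min W : f c * form B W W <= form B (W *m Phi) W.
  have [->|W_neq0] := eqVneq W 0; first by rewrite mul0mx !form0l mulr0.
  have := c_min _ (mem_set (normalize _ W_neq0)).
  rewrite fZ ?invr_eq0 ?normr_eq0 //.
  by rewrite /f ler_pdivlMr //; exact: form_pos.
have fc_eigen : c *m Phi = f c *: c.
  apply: rayleigh_minimizer_eigenvector fc_min _.
  by rewrite /f divfK //; apply/lt0r_neq0/form_pos/S_neq0.
have lam0_le : lam0 <= f c.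
  by apply: lam0_min; apply/eigenvalueP; exists c => //; exact: S_neq0.
apply: le_trans (fc_min V); apply: ler_wpM2r lam0_le; exact: form_ge0.
Qed.
Local Close Scope classical_set_scope.

Lemma rayleigh_sq_ge_min_eigenvalue V : 0 <= lam0 ->
  lam0 * form B (V *m Phi) V <= form B (V *m Phi) (V *m Phi).
Proof.
move=> lam0_ge0; set E := V *m Phi - lam0 *: V.
have EV_ge0 : 0 <= form B E V.
  by rewrite formBl formZl subr_ge0; exact: rayleigh_ge_min_eigenvalue.
have EVPhi : form B E (V *m Phi) = form B E E + lam0 * form B E V.
  by rewrite -{1}[V *m Phi](subrK (lam0 *: V)) formDr formZr.
rewrite -subr_ge0 -(form_sym V) -formZl -formBl -/E EVPhi.
by rewrite addr_ge0 ?mulr_ge0 ?form_ge0.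
Qed.

End Rayleigh.

Section CommutingEigenvector.
Variables (R : realType) (n : nat) (br : 'rV[R]_n -> 'rV[R]_n -> 'rV[R]_n).
Variables (B Phi : 'M[R]_n) (nabla : 'rV[R]_n -> 'rV[R]_n -> 'rV[R]_n) (lam : R).
Hypothesis br_anti : forall X Y, br X Y = - br Y X.
Hypothesis form_sym : forall X Y, form B X Y = form B Y X.
Hypothesis form_ad_inv : forall X Y Z, form B (br Z X) Y + form B X (br Z Y) = 0.
Hypothesis Phi_sa : forall X Y, form B (X *m Phi) Y = form B X (Y *m Phi).
Hypothesis nabla_koszul : koszul br (lmetric B Phi) nabla.

Local Notation h := (lmetric B Phi).

Lemma br_diag X : br X X = 0.
Proof.
have : 2%:R *: br X X = 0 by rewrite scaler_nat mulr2n {1}br_anti addNr.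
by move/eqP; rewrite scaler_eq0 pnatr_eq0 /= => /eqP.
Qed.

Lemma form_br_self X A : form B (br X A) X = 0.
Proof. by have := form_ad_inv A X X; rewrite br_diag form0r addr0. Qed.

Lemma form_br_centralizer X Y A : br X Y = 0 -> form B (br X A) Y = 0.
Proof. by move=> XY; have := form_ad_inv A Y X; rewrite XY form0r addr0. Qed.

Variables X W V : 'rV[R]_n.
Hypothesis X_eigen : X *m Phi = lam *: X.
Hypothesis X_commutes : br X (W *m Phi) = 0.
Hypothesis V_preimage : V *m Phi = br X W.

Let Z := br X W.

Lemma sec_curv_commuting_eigenvector :
  4 * h (curv br nabla X W W) X =
  - (3 * (form B (Z *m Phi) Z - lam * form B Z Z) + lam * (form B Z Z - lam * form B V Z)).
Proof.
have hX A : h A X = lam * form B A X by rewrite /lmetric Phi_sa X_eigen formZr.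
have hW A : h A W = form B A (W *m Phi) by rewrite /lmetric Phi_sa.
have hV A : h A V = form B A Z by rewrite /lmetric Phi_sa V_preimage.
have hN A C : h (- A) C = - h A C by rewrite /lmetric mulNmx formNl.
have hZ A : h Z A = h A Z by rewrite /lmetric form_sym Phi_sa.
have WX : br W X = - Z by rewrite br_anti.
have adW A : form B (br W A) X = form B A Z.
  by have := form_ad_inv A X W; rewrite WX formNr => /eqP; rewrite subr_eq0 => /eqP.
have adY A := @form_br_centralizer X _ A X_commutes.
have k1 : h (nabla X (nabla W W)) X = 0.
  have := nabla_koszul X (nabla W W) X.
  by rewrite !hX !form_br_self br_diag (br_anti (nabla W W)) formNl form_br_self
    /lmetric mul0mx form0l; lra.
have k2 : 2 * h (nabla W (nabla X W)) X = lam * form B (nabla X W) Z + h (nabla X W) Z.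
  have := nabla_koszul W (nabla X W) X.
  by rewrite !hX adW WX hN hZ hW (br_anti (nabla X W)) formNl adY; lra.
have k3 : 2 * h (nabla Z W) X = h Z Z - lam * form B Z Z.
  have := nabla_koszul Z W X.
  rewrite !hX (br_anti Z W) formNl adW (br_anti Z X) hW formNl adY WX hN.
  lra.
have p : 2 * (lam * form B (nabla X W) Z) = lam * (form B Z Z - lam * form B V Z).
  have := nabla_koszul X W V.
  by rewrite !hV hW adY hX adW -/Z => p; rewrite mulrCA p; ring.
have q : 2 * h (nabla X W) Z = h Z Z - lam * form B Z Z.
  have := nabla_koszul X W Z.
  by rewrite hW adY hX adW -/Z; lra.
move: k1 k2 k3 p q; rewrite /curv /lmetric !mulmxBl !formBl -/Z; lra.
Qed.

End CommutingEigenvector.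

Section MetricMatrix.
Variables (R : realType) (n : nat) (B Phi : 'M[R]_n).
Hypothesis Phi_metric : metric_matrix B Phi.

Lemma metric_matrix_unitmx : Phi \in unitmx.
Proof.
rewrite unitmxE unitfE; apply/det0P => -[v v_neq0 vPhi0].
by have := Phi_metric.2 v v_neq0; rewrite vPhi0 form0l ltxx.
Qed.

Lemma metric_matrix_eigenvalue_gt0 (mu : R) :
  (forall X, X != 0 -> 0 < form B X X) -> eigenvalue Phi mu -> 0 < mu.
Proof.
move=> form_pos /eigenvalueP[v vPhi v_neq0].
have := Phi_metric.2 v v_neq0; rewrite vPhi formZl.
by rewrite pmulr_lgt0 // form_pos.
Qed.

End MetricMatrix.

Theorem mainTheorem6 (R : realType) (n : nat)
    (br : 'rV[R]_n -> 'rV[R]_n -> 'rV[R]_n) (B Phi : 'M[R]_n) (lam0 : R) :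
  compact_lie_data br B ->
  metric_matrix B Phi ->
  nonneg_sec_curv br B Phi ->
  eigenvalue Phi lam0 ->
  (forall mu, eigenvalue Phi mu -> lam0 <= mu) ->
  forall X Y : 'rV[R]_n,
    (X <= eigenspace Phi lam0)%MS ->
    br X Y = 0 ->
    (br X (Y *m invmx Phi) <= eigenspace Phi lam0)%MS.
Proof.
move=> [_ [br_anti [_ [form_sym [form_pos ad_inv]]]]] Phi_metric [nabla [koszul sec_ge0]].
move=> lam0_eig lam0_min X Y /eigenspaceP X_eigen XY0.
have Phi_unit := metric_matrix_unitmx Phi_metric.
have lam0_gt0 := metric_matrix_eigenvalue_gt0 Phi_metric form_pos lam0_eig.
have Phi_sa := Phi_metric.1.
have ray := rayleigh_ge_min_eigenvalue form_sym form_pos Phi_sa lam0_min.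
set W := Y *m invmx Phi; set Z := br X W; set V := Z *m invmx Phi.
have WPhi : W *m Phi = Y by rewrite mulmxKV.
have VPhi : V *m Phi = Z by rewrite mulmxKV.
have curv_XW := sec_curv_commuting_eigenvector br_anti form_sym ad_inv Phi_sa koszul
  X_eigen (etrans (congr1 (br X) WPhi) XY0) VPhi.
have curv_XW_ge0 := sec_ge0 X W.
have ZPhiZ_ge := ray Z.
have ZZ_ge : lam0 * form B V Z <= form B Z Z.
  have := rayleigh_sq_ge_min_eigenvalue form_sym form_pos Phi_sa lam0_min V (ltW lam0_gt0).
  by rewrite VPhi (form_sym Z V).
have gap_ge0 : 0 <= lam0 * (form B Z Z - lam0 * form B V Z).
  by apply: mulr_ge0; [exact: ltW | rewrite subr_ge0].
apply/eigenspaceP; apply: (rayleigh_minimizer_eigenvector form_sym form_pos Phi_sa ray).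
by move: curv_XW; rewrite -/Z; lra.
Qed.
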